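(* Let $\mathcal{V}\subset\mathbb{R}$ be finite and $\mathcal{W}\subset\mathcal{V}$ with $p:=|\mathcal{W}|$, and suppose the average of the elements of $\mathcal{V}$ and the average of the elements of $\mathcal{W}$ are both zero. Consider inputs with two components $z_1,z_2\in\{[v]:v\in\mathcal{V}\}$, where component $[v]$ has associated value $v$, and target $y([v_1],[v_2])=v_1+v_2$. The training set consists of all pairs $([v_1],[v_2])$ with at least one of $v_1,v_2$ in $\mathcal{W}$. Let the inputs be represented with a compositionally structured kernel $K$ with $K=\kappa_k$ for pairs of inputs sharing exactly $k\in\{0,1,2\}$ components, with $\kappa_2>\kappa_0$, and let $f$ be the kernel model (minimum $\ell_2$-norm linear readout) that fits the training data exactly. Then for every test pair $([v_1],[v_2])$ with $v_1,v_2\in\mathcal{V}\setminus\mathcal{W}$, $$f([v_1],[v_2])=m(v_1+v_2),\qquad m:=\frac{p\,S(1;2)}{1+(p-2)S(1;2)},$$ where $S(1;2)=\frac{\kappa_1-\kappa_0}{\kappa_2-\kappa_0}$.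
   Context: A kernel is compositionally structured iff the similarity of two inputs depends only on the number of components they share. The model is $f(x)=w^T\phi(x)$ with $w$ the minimum $\ell_2$-norm readout that exactly interpolates the training targets (the limit of gradient descent from $w_0=0$); in dual form $f(x)=\sum_i a_iK(x,x_i)$ with $\sum_j a_jK(x_i,x_j)=y_i$ on the training set, where the training kernel matrix is assumed invertible. The quantity $S(1;2)$ is the representational salience of single components for two-component inputs, which for this kernel equals $(\kappa_1-\kappa_0)/(\kappa_2-\kappa_0)$. *)

From HB Require Import structures.
From mathcomp Require Import all_boot all_order all_algebra.
Set Implicit Arguments. Unset Strict Implicit. Unset Printing Implicit Defensive.
Import Order.TTheory GRing.Theory Num.Theory.
Local Open Scope ring_scope.

(* Components: a finite type C with an injective value map [val : C -> R];
   the finite set V of the paper is the image of [val], and component [v]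
   is the unique c : C with val c = v. *)

Definition shared (C : finType) (x x' : C * C) : nat :=
  ((x.1 == x'.1) + (x.2 == x'.2))%N.

Definition compK (R : ringType) (C : finType) (k0 k1 k2 : R) (x x' : C * C) : R :=
  match shared x x' with
  | 0%N => k0
  | 1%N => k1
  | _ => k2
  end.

Definition train_set (C : finType) (W : {set C}) : {set C * C} :=
  [set x | (x.1 \in W) || (x.2 \in W)].

Definition target (R : ringType) (C : finType) (val : C -> R) (x : C * C) : R :=
  val x.1 + val x.2.

Definition train_kmx (R : ringType) (C : finType) (W : {set C}) (K : C * C -> C * C -> R)
  : 'M[R]_#|train_set W| :=
  \matrix_(i, j) K (enum_val i) (enum_val j).

Definition train_y (R : ringType) (C : finType) (W : {set C}) (val : C -> R)
  : 'cV[R]_#|train_set W| :=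
  \col_i target val (enum_val i).

(* the kernel model in dual form: f(x) = sum_i a_i K(x, x_i),
   with a the (unique, kernel matrix invertible) solution of K_train a = y *)
Definition kernel_model (R : comUnitRingType) (C : finType) (W : {set C}) (val : C -> R)
  (K : C * C -> C * C -> R) (x : C * C) : R :=
  let a := invmx (train_kmx W K) *m train_y W val in
  \sum_(j < #|train_set W|) a j 0 * K x (enum_val j).

Definition salience (R : fieldType) (k0 k1 k2 : R) : R := (k1 - k0) / (k2 - k0).

(* The compositional kernel acts on functions of input pairs as [k0] times
   the total sum, plus [k1 - k0] times the row and column sums, plus
   [k2 - 2 k1 + k0] times the identity.  Because the values average to zero
   on V and on W, the target [v1 + v2] on the training set splits into two
   eigenvectors of the training kernel matrix: the part carried by components
   in W, with eigenvalue [(k1 - k0) |V| + k2 - 2 k1 + k0], and the part carried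
   by components outside W, with eigenvalue [(k1 - k0) p + k2 - 2 k1 + k0].
   Inverting the matrix divides each part by its eigenvalue; at a test pair
   outside W only the second part is seen, through the row and column sums,
   which gives [(k1 - k0) p / ((k1 - k0) p + k2 - 2 k1 + k0)] times
   [v1 + v2], and this ratio is [m]. *)

From HB Require Import structures.
From mathcomp Require Import all_boot all_order all_algebra.
From mathcomp Require Import ring.
Import Order.TTheory GRing.Theory Num.Theory.
Set Implicit Arguments. Unset Strict Implicit.
Local Open Scope ring_scope.

Lemma sum_delta_mul (R : nzSemiRingType) (T : finType) (s : T) (G : T -> R) :
  \sum_t (s == t)%:R * G t = G s.
Proof.
rewrite (bigD1 s) //= eqxx mul1r big1 ?addr0 // => t /negbTE.
by rewrite eq_sym => ->; rewrite mul0r.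
Qed.

Lemma sum_pair (R : nmodType) (C : finType) (F : C * C -> R) :
  \sum_x F x = \sum_u \sum_v F (u, v).
Proof. by rewrite pair_bigA; apply: eq_bigr => -[]. Qed.

Lemma mean_eq0 (R : numFieldType) (I : finType) (A : {pred I}) (F : I -> R) :
  (\sum_(i in A) F i) / #|A|%:R = 0 -> \sum_(i in A) F i = 0.
Proof.
have [/card0_eq A0 _|nA /eqP] := eqVneq #|A| 0%N; first by rewrite big_pred0.
by rewrite mulf_eq0 invr_eq0 pnatr_eq0 (negbTE nA) orbF => /eqP.
Qed.

Lemma invmx_mul_eigen (R : fieldType) (n : nat) (A : 'M[R]_n) (u : 'cV[R]_n)
    (lam : R) :
  A \in unitmx -> A *m u = lam *: u -> invmx A *m u = lam^-1 *: u.
Proof.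
move=> A_unit Au.
(* For [lam = 0] the vector [u] vanishes, matching the junk value [0^-1 = 0]. *)
have [lam0|lam_neq0] := eqVneq lam 0.
  have -> : u = 0 by rewrite -(mulKmx A_unit u) Au lam0 scale0r mulmx0.
  by rewrite mulmx0 scaler0.
by rewrite -{1}(scalerK lam_neq0 u) -Au -scalemxAr mulKmx.
Qed.

Section CompositionalKernel.
Variables (R : comNzRingType) (C : finType) (k0 k1 k2 : R).

Lemma compK_indicator (x x' : C * C) :
  compK k0 k1 k2 x x' = k0 + (k1 - k0) * (x.1 == x'.1)%:R
    + (k1 - k0) * (x.2 == x'.2)%:R + (k2 - 2 * k1 + k0) * (x == x')%:R.
Proof.
case: x x' => [u v] [u' v']; rewrite /compK /shared xpair_eqE /=.
by case: (u == u'); case: (v == v') => /=; ring.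
Qed.

Lemma sum_compK_mul (F : C * C -> R) (x : C * C) :
  \sum_x' compK k0 k1 k2 x x' * F x' =
  k0 * \sum_x' F x' + (k1 - k0) * \sum_v F (x.1, v)
    + (k1 - k0) * \sum_u F (u, x.2) + (k2 - 2 * k1 + k0) * F x.
Proof.
under eq_bigr => x' _ do rewrite compK_indicator mulrDl mulrDl mulrDl -!mulrA.
rewrite !big_split /= -!mulr_sumr sum_delta_mul; congr (_ * _ + _ * _ + _ * _ + _).
- rewrite sum_pair /=; under eq_bigr => u _ do rewrite -mulr_sumr.
  exact: sum_delta_mul.
- by rewrite sum_pair; apply: eq_bigr => u _; rewrite sum_delta_mul.
Qed.

End CompositionalKernel.

Section TrainingTargets.
Variables (R : comNzRingType) (C : finType) (W : {set C}).

Definition restrict (A : {set C}) (f : C -> R) (c : C) : R :=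
  if c \in A then f c else 0.

Definition train_target (f : C -> R) (x : C * C) : R :=
  if x \in train_set W then target f x else 0.

Definition train_col (f : C -> R) : 'cV[R]_#|train_set W| :=
  \col_i target f (enum_val i).

Lemma sum_restrict (A : {set C}) (f : C -> R) :
  \sum_c restrict A f c = \sum_(c in A) f c.
Proof. by rewrite [RHS]big_mkcond. Qed.

Lemma restrict_setC_add (A : {set C}) (f : C -> R) (c : C) :
  restrict A f c + restrict (~: A) f c = f c.
Proof. by rewrite /restrict inE; case: (c \in A); rewrite ?addr0 ?add0r. Qed.

Lemma train_col_restrict_split (f : C -> R) :
  train_col f = train_col (restrict W f) + train_col (restrict (~: W) f).
Proof. by apply/colP => i; rewrite !mxE /target addrACA !restrict_setC_add. Qed.

Lemma train_target_swap (f : C -> R) (u v : C) :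
  train_target f (u, v) = train_target f (v, u).
Proof. by rewrite /train_target /target !inE /= orbC addrC. Qed.

Lemma sum_train_target_col (f : C -> R) (t : C) :
  \sum_u train_target f (u, t) = \sum_v train_target f (t, v).
Proof. by apply: eq_bigr => u _; rewrite train_target_swap. Qed.

Lemma sum_train_target_row (f : C -> R) (s : C) :
  \sum_v train_target f (s, v) =
  if s \in W then #|C|%:R * f s + \sum_v f v else #|W|%:R * f s + \sum_(v in W) f v.
Proof.
rewrite /train_target /target; case: ifP => sW.
  under eq_bigr => v _ do rewrite inE /= sW.
  by rewrite big_split sumr_const mulr_natl.
under eq_bigr => v _ do rewrite inE /= sW.
by rewrite -big_mkcond big_split sumr_const mulr_natl.
Qed.

Lemma sum_enum_train_target (F : C * C -> R) (f : C -> R) :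
  \sum_(j < #|train_set W|) F (enum_val j) * target f (enum_val j) =
  \sum_x F x * train_target f x.
Proof.
rewrite -(big_enum_val (fun x => F x * target f x)) big_mkcond.
by apply: eq_bigr => x _; rewrite /train_target; case: ifP; rewrite ?mulr0.
Qed.

End TrainingTargets.

Section KernelOnTrainTargets.
Variables (R : comNzRingType) (C : finType) (W : {set C}) (k0 k1 k2 : R).
Variables (f : C -> R) (lam : R).
Hypothesis sum_train_target_row_eigen :
  forall s, \sum_v train_target W f (s, v) = lam * f s.
Hypothesis sum_f0 : \sum_c f c = 0.

Lemma sum_compK_train_target (x : C * C) :
  \sum_x' compK k0 k1 k2 x x' * train_target W f x' =
  (k1 - k0) * lam * target f x + (k2 - 2 * k1 + k0) * train_target W f x.
Proof.
rewrite sum_compK_mul sum_pair.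
under eq_bigr => u _ do rewrite sum_train_target_row_eigen.
rewrite sum_train_target_col -mulr_sumr sum_f0 !sum_train_target_row_eigen /target; ring.
Qed.

Lemma train_kmx_mul_train_col :
  train_kmx W (compK k0 k1 k2) *m train_col W f =
  ((k1 - k0) * lam + (k2 - 2 * k1 + k0)) *: train_col W f.
Proof.
apply/colP => i; rewrite !mxE.
under eq_bigr => j _ do rewrite !mxE.
rewrite (sum_enum_train_target W (compK k0 k1 k2 (enum_val i))) sum_compK_train_target.
by rewrite /train_target enum_valP; ring.
Qed.

End KernelOnTrainTargets.

Section MeanZeroValues.
Variables (R : comNzRingType) (C : finType) (W : {set C}) (val : C -> R).
Hypothesis sum_val0 : \sum_c val c = 0.
Hypothesis sum_val_W0 : \sum_(c in W) val c = 0.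

Lemma sum_val_setC0 : \sum_(c in ~: W) val c = 0.
Proof.
move: sum_val0; rewrite (bigID (mem W)) /= sum_val_W0 add0r => sum_notin_W.
by rewrite -[RHS]sum_notin_W; apply: eq_bigl => c; rewrite inE.
Qed.

Lemma sum_train_target_row_restrict (s : C) :
  \sum_v train_target W (restrict W val) (s, v) = #|C|%:R * restrict W val s.
Proof.
rewrite sum_train_target_row sum_restrict sum_val_W0 /restrict.
case: ifP => sW; first by rewrite sW addr0.
by rewrite sW !mulr0 add0r -[RHS]sum_val_W0; apply: eq_bigr => v ->.
Qed.

Lemma sum_train_target_row_restrictC (s : C) :
  \sum_v train_target W (restrict (~: W) val) (s, v) =
  #|W|%:R * restrict (~: W) val s.
Proof.
rewrite sum_train_target_row sum_restrict sum_val_setC0 /restrict inE.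
case: ifP => sW; first by rewrite sW !mulr0 addr0.
by rewrite sW big1 ?addr0 // => v vW; rewrite inE vW.
Qed.

End MeanZeroValues.

Lemma kernel_model_train_cols (R : comUnitRingType) (C : finType) (W : {set C})
    (val : C -> R) (K : C * C -> C * C -> R) (x : C * C) (a b : R) (f h : C -> R) :
  invmx (train_kmx W K) *m train_y W val = a *: train_col W f + b *: train_col W h ->
  kernel_model W val K x =
  a * \sum_x' K x x' * train_target W f x' + b * \sum_x' K x x' * train_target W h x'.
Proof.
rewrite /kernel_model => ->.
under eq_bigr => j _ do rewrite !mxE mulrDl -!mulrA ![_ * K x _]mulrC.
by rewrite big_split /= -!mulr_sumr !sum_enum_train_target.
Qed.

Lemma salience_ratio (R : fieldType) (k0 k1 k2 p : R) : k2 != k0 ->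
  p * salience k0 k1 k2 / (1 + (p - 2) * salience k0 k1 k2) =
  (k1 - k0) * p / ((k1 - k0) * p + (k2 - 2 * k1 + k0)).
Proof.
rewrite /salience -subr_eq0 => k20.
have -> : 1 + (p - 2) * ((k1 - k0) / (k2 - k0)) =
          ((k1 - k0) * p + (k2 - 2 * k1 + k0)) / (k2 - k0) by field.
(* The denominator may vanish; abstracting its inverse keeps [field] from
   requiring it to be nonzero. *)
by rewrite invf_div; move: ((k1 - k0) * p + _)^-1 => d; field.
Qed.

Theorem proposition2 (R : realFieldType) (C : finType) (val : C -> R)
  (W : {set C}) (k0 k1 k2 : R) :
  injective val ->
  (\sum_(c : C) val c) / #|C|%:R = 0 ->
  (\sum_(c in W) val c) / #|W|%:R = 0 ->
  k0 < k2 ->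
  train_kmx W (compK k0 k1 k2) \in unitmx ->
  forall c1 c2 : C, c1 \notin W -> c2 \notin W ->
  let p : R := #|W|%:R in
  let S := salience k0 k1 k2 in
  kernel_model W val (compK k0 k1 k2) (c1, c2)
    = (p * S / (1 + (p - 2) * S)) * (val c1 + val c2).
Proof.
move=> _ /mean_eq0 sum_val0 /mean_eq0 sum_val_W0 k0_lt_k2 K_unit c1 c2 c1W c2W p S.
set vW := restrict W val; set vN := restrict (~: W) val.
have sum_vW0 : \sum_c vW c = 0 by rewrite sum_restrict.
have sum_vN0 : \sum_c vN c = 0 by rewrite sum_restrict sum_val_setC0.
have rowW := sum_train_target_row_restrict sum_val_W0.
have rowN := sum_train_target_row_restrictC sum_val0 sum_val_W0.
have KW := train_kmx_mul_train_col k0 k1 k2 rowW sum_vW0.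
have KN := train_kmx_mul_train_col k0 k1 k2 rowN sum_vN0.
have dual_coef : invmx (train_kmx W (compK k0 k1 k2)) *m train_y W val =
    ((k1 - k0) * #|C|%:R + (k2 - 2 * k1 + k0))^-1 *: train_col W vW
  + ((k1 - k0) * p + (k2 - 2 * k1 + k0))^-1 *: train_col W vN.
  by rewrite [train_y _ _]train_col_restrict_split mulmxDr
    (invmx_mul_eigen K_unit KW) (invmx_mul_eigen K_unit KN).
rewrite (kernel_model_train_cols _ dual_coef).
rewrite (sum_compK_train_target k0 k1 k2 rowW sum_vW0).
rewrite (sum_compK_train_target k0 k1 k2 rowN sum_vN0).
have test_notin : (c1, c2) \notin train_set W by rewrite inE negb_or c1W c2W.
rewrite /train_target (negbTE test_notin) /target /vW /vN /restrict !inE.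
rewrite (negbTE c1W) (negbTE c2W) /= /S salience_ratio ?gt_eqF //.
by rewrite /p; ring.
Qed.
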